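(* For all $x,h\in\mathbb R$ with $h\ne0$, $$\exp\Big(\tfrac{(x^2-1)h^2}{24}-\tfrac{x^4h^4}{960}\Big)<\frac{\Phi(x+\frac h2)-\Phi(x-\frac h2)}{h\,\phi(x)}<\exp\Big(\tfrac{(x^2-1)h^2}{24}+\tfrac{h^4}{1440}\Big).$$ Moreover, $$\log\Big(\frac{\Phi(x+\frac h2)-\Phi(x-\frac h2)}{h\,\phi(x)}\Big)=\frac{(x^2-1)h^2}{24}+\frac{(-x^4-4x^2+2)h^4}{2880}+O(h^6)$$ uniformly for $x,h$ in bounded sets (with $h\ne 0$), where $\max_{x\in\mathbb R}(-x^4-4x^2+2)=2$ and $\min_{x\in\mathbb R\setminus\{0\}}(-x^4-4x^2+2)/x^4=-3$ (as an infimum over $x\neq 0$).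
   Context: $\Phi$ is the standard normal distribution function and $\phi=\Phi'$ its density. *)

From Stdlib Require Import Reals.
From Coquelicot Require Import Coquelicot.
Open Scope R_scope.

Definition phi (x : R) : R := exp (- x ^ 2 / 2) / sqrt (2 * PI).

Definition Phi (x : R) : R :=
  RInt_gen phi (Rbar_locally m_infty) (at_point x).

Definition ratio (x h : R) : R :=
  (Phi (x + h / 2) - Phi (x - h / 2)) / (h * phi x).

(* With [s = h/2] and [phi (x + t) = phi x exp (- t^2/2) exp (- x t)], the quantity
   [ratio x h] is the mean over [0, s] of [exp (- t^2/2) cosh (x t)].  Comparing
   derivatives gives [exp (y^2/2 - y^4/12) <= cosh y <= exp (y^2/6) (1 + y^2/3)].  The
   upper bound makes the integrand smaller than the derivative of
   [t exp ((x^2-1) t^2/6 + t^4/90)]; the lower bound makes it larger than [exp (g t)], and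
   the tangent inequality [exp g >= exp m (1 + g - m)], with [m] the running mean of [g],
   makes that larger than the derivative of [t exp (m t)] (Jensen's inequality).  For the expansion, the
   integrand agrees with its Taylor polynomial of degree 4 up to [O(t^6)] uniformly on
   bounded sets, so [ratio x h = 1 + a s^2 + b s^4 + O(s^6)]; expanding [ln] to second
   order around 1, with the lower bound keeping [ratio] away from 0, gives the formula. *)

From Stdlib Require Import Reals Lra Psatz Lia Classical Factorial.
From Coquelicot Require Import Coquelicot.
Open Scope R_scope.

Lemma MVT_le (f df : R -> R) (a b : R) : a <= b ->
  (forall t, a <= t <= b -> is_derive f t (df t)) ->
  exists c, a <= c <= b /\ f b - f a = df c * (b - a).
Proof.
  intros Hab Hd.
  destruct (MVT_gen f a b df) as [c [Hc E]];
    rewrite ?Rmin_left, ?Rmax_right in * by lra.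
  - intros t Ht; apply Hd; lra.
  - intros t Ht; apply continuity_pt_filterlim, (@ex_derive_continuous R_AbsRing R_NormedModule).
    exists (df t); apply Hd; lra.
  - exists c; auto.
Qed.

Lemma le_of_derive_nonneg (f df : R -> R) (a b : R) : a <= b ->
  (forall t, a <= t <= b -> is_derive f t (df t)) ->
  (forall t, a <= t <= b -> 0 <= df t) -> f a <= f b.
Proof.
  intros Hab Hd Hp; destruct (MVT_le f df a b Hab Hd) as [c [Hc E]].
  assert (0 <= df c * (b - a)) by (apply Rmult_le_pos; [apply Hp|]; lra).
  lra.
Qed.

Lemma lt_of_derive_nonneg (f df : R -> R) (a b c d : R) : a <= c < d /\ d <= b ->
  (forall t, a <= t <= b -> is_derive f t (df t)) ->
  (forall t, a <= t <= b -> 0 <= df t) ->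
  (forall t, c <= t <= d -> 0 < df t) -> f a < f b.
Proof.
  intros Hacdb Hd Hp Hs.
  assert (f a <= f c)
    by (apply (le_of_derive_nonneg f df); intros; try apply Hd; try apply Hp; lra).
  assert (f d <= f b)
    by (apply (le_of_derive_nonneg f df); intros; try apply Hd; try apply Hp; lra).
  destruct (MVT_le f df c d) as [e [He E]]; [lra| intros; apply Hd; lra|].
  assert (0 < df e * (d - c)) by (apply Rmult_lt_0_compat; [apply Hs|]; lra).
  lra.
Qed.

Lemma mul_exp_opp_le_of_derive (f df g dg : R -> R) (a b : R) : a <= b ->
  (forall t, a <= t <= b -> is_derive f t (df t)) ->
  (forall t, a <= t <= b -> is_derive g t (dg t)) ->
  (forall t, a <= t <= b -> dg t * f t <= df t) ->
  f a * exp (- g a) <= f b * exp (- g b).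
Proof.
  intros Hab Hf Hg Hd.
  apply (le_of_derive_nonneg (fun t => f t * exp (- g t))
           (fun t => (df t - dg t * f t) * exp (- g t))); auto.
  - intros t Ht.
    evar (l : R); replace ((df t - dg t * f t) * exp (- g t)) with l; subst l.
    + apply (is_derive_mult f (fun t => exp (- g t))); [apply Hf; auto| |apply Rmult_comm].
      apply (is_derive_comp exp (fun t => - g t)).
      * apply is_derive_Reals, derivable_pt_lim_exp.
      * apply (is_derive_opp g); apply Hg; auto.
    + change (df t * exp (- g t) + f t * (- dg t * exp (- g t))
              = (df t - dg t * f t) * exp (- g t)); ring.
  - intros t Ht. apply Rmult_le_pos; [generalize (Hd t Ht); lra | apply Rlt_le, exp_pos].
Qed.

Lemma exp_mul_exp_opp (y : R) : exp y * exp (- y) = 1.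
Proof. rewrite <- exp_plus, Rplus_opp_r; apply exp_0. Qed.

Lemma exp_le_mono (a b : R) : a <= b -> exp a <= exp b.
Proof. intros H; destruct (Req_dec a b) as [->|]; [lra | apply Rlt_le, exp_increasing; lra]. Qed.

Lemma exp_le_of_derive (f df g dg : R -> R) (y : R) : 0 <= y ->
  (forall t, 0 <= t <= y -> is_derive f t (df t)) ->
  (forall t, 0 <= t <= y -> is_derive g t (dg t)) ->
  (forall t, 0 <= t <= y -> dg t * f t <= df t) ->
  exp (g 0) <= f 0 -> exp (g y) <= f y.
Proof.
  intros Hy Hf Hg Hd H0.
  assert (Hm := mul_exp_opp_le_of_derive f df g dg 0 y Hy Hf Hg Hd).
  assert (1 <= f 0 * exp (- g 0)).
  { rewrite <- (exp_mul_exp_opp (g 0)).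
    apply Rmult_le_compat_r; [apply Rlt_le, exp_pos | auto]. }
  generalize (exp_mul_exp_opp (g y)) (exp_pos (g y)) (exp_pos (- g y)); nra.
Qed.

Lemma le_exp_of_derive (f df g dg : R -> R) (y : R) : 0 <= y ->
  (forall t, 0 <= t <= y -> is_derive f t (df t)) ->
  (forall t, 0 <= t <= y -> is_derive g t (dg t)) ->
  (forall t, 0 <= t <= y -> df t <= dg t * f t) ->
  f 0 <= exp (g 0) -> f y <= exp (g y).
Proof.
  intros Hy Hf Hg Hd H0.
  assert (Hm := mul_exp_opp_le_of_derive (fun t => - f t) (fun t => - df t) g dg 0 y Hy
                  (fun t Ht => is_derive_opp f t (df t) (Hf t Ht)) Hg
                  (fun t Ht => ltac:(generalize (Hd t Ht); lra))).
  assert (f 0 * exp (- g 0) <= 1).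
  { rewrite <- (exp_mul_exp_opp (g 0)).
    apply Rmult_le_compat_r; [apply Rlt_le, exp_pos | auto]. }
  generalize (exp_mul_exp_opp (g y)) (exp_pos (g y)) (exp_pos (- g y)); nra.
Qed.

Lemma is_derive_cosh (y : R) : is_derive cosh y (sinh y).
Proof. apply is_derive_Reals, derivable_pt_lim_cosh. Qed.

Lemma cosh_opp (y : R) : cosh (- y) = cosh y.
Proof. unfold cosh; rewrite Ropp_involutive; field. Qed.

Lemma cosh_pos (y : R) : 0 < cosh y.
Proof. unfold cosh; generalize (exp_pos y) (exp_pos (- y)); lra. Qed.

Lemma sinh_ge0 (y : R) : 0 <= y -> 0 <= sinh y.
Proof.
  intros Hy; rewrite <- sinh_0.
  destruct (Req_dec y 0) as [->|]; [lra | apply Rlt_le, sinh_lt; lra].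
Qed.

Lemma sinh_le_mul_cosh (y : R) : 0 <= y -> sinh y <= y * cosh y.
Proof.
  intros Hy.
  assert (0 * cosh 0 - sinh 0 <= y * cosh y - sinh y); [|rewrite sinh_0 in *; lra].
  apply (le_of_derive_nonneg (fun t => t * cosh t - sinh t) (fun t => t * sinh t)); auto.
  - intros t _. unfold cosh, sinh. auto_derive; auto. field.
  - intros t Ht. apply Rmult_le_pos; [|apply sinh_ge0]; lra.
Qed.

Lemma cubic_mul_cosh_le_sinh (y : R) : 0 <= y -> (y - y ^ 3 / 3) * cosh y <= sinh y.
Proof.
  intros Hy.
  assert (sinh 0 - (0 - 0 ^ 3 / 3) * cosh 0 <= sinh y - (y - y ^ 3 / 3) * cosh y);
    [|rewrite sinh_0 in *; lra].
  apply (le_of_derive_nonneg (fun t => sinh t - (t - t ^ 3 / 3) * cosh t)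
           (fun t => t ^ 2 * cosh t - (t - t ^ 3 / 3) * sinh t)); auto.
  - intros t _. unfold cosh, sinh. auto_derive; auto. field.
  - intros t Ht.
    generalize (sinh_le_mul_cosh t ltac:(lra)) (sinh_ge0 t ltac:(lra)) (cosh_pos t); intros.
    destruct (Rle_dec (t - t ^ 3 / 3) 0).
    + assert (0 <= t ^ 2 * cosh t) by (apply Rmult_le_pos; nra). nra.
    + assert ((t - t ^ 3 / 3) * sinh t <= (t - t ^ 3 / 3) * (t * cosh t))
        by (apply Rmult_le_compat_l; lra).
      assert (0 <= t ^ 4 * cosh t) by (apply Rmult_le_pos; nra).
      nra.
Qed.

Lemma exp_le_cosh (y : R) : exp (y ^ 2 / 2 - y ^ 4 / 12) <= cosh y.
Proof.
  assert (Hpos : forall y, 0 <= y -> exp (y ^ 2 / 2 - y ^ 4 / 12) <= cosh y).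
  { intros z Hz.
    apply (exp_le_of_derive cosh sinh (fun t => t ^ 2 / 2 - t ^ 4 / 12)
             (fun t => t - t ^ 3 / 3)); auto.
    - intros t _; apply is_derive_cosh.
    - intros t _. auto_derive; auto. field.
    - intros t Ht; apply cubic_mul_cosh_le_sinh; lra.
    - rewrite cosh_0. replace (0 ^ 2 / 2 - 0 ^ 4 / 12) with 0 by field. rewrite exp_0; lra. }
  destruct (Rle_dec 0 y); auto.
  rewrite <- cosh_opp. replace (y ^ 2 / 2 - y ^ 4 / 12) with ((- y) ^ 2 / 2 - (- y) ^ 4 / 12)
    by field. apply Hpos; lra.
Qed.

Lemma pade_sinh_le_cosh (y : R) : 0 <= y -> 3 * (3 + y ^ 2) * sinh y <= y * (9 + y ^ 2) * cosh y.
Proof.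
  intros Hy.
  assert (0 * (9 + 0 ^ 2) * cosh 0 - 3 * (3 + 0 ^ 2) * sinh 0
          <= y * (9 + y ^ 2) * cosh y - 3 * (3 + y ^ 2) * sinh y); [|rewrite sinh_0 in *; lra].
  apply (le_of_derive_nonneg (fun t => t * (9 + t ^ 2) * cosh t - 3 * (3 + t ^ 2) * sinh t)
           (fun t => t * (3 + t ^ 2) * sinh t)); auto.
  - intros t _. unfold cosh, sinh. auto_derive; auto. field.
  - intros t Ht. apply Rmult_le_pos; [nra | apply sinh_ge0; lra].
Qed.

Lemma cosh_le_exp (y : R) : cosh y <= exp (y ^ 2 / 6) * (1 + y ^ 2 / 3).
Proof.
  assert (Hpos : forall y, 0 <= y -> cosh y <= exp (y ^ 2 / 6) * (1 + y ^ 2 / 3)).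
  2:{ destruct (Rle_dec 0 y); auto.
      rewrite <- cosh_opp. replace (y ^ 2) with ((- y) ^ 2) by field. apply Hpos; lra. }
  clear y; intros y Hy.
  replace (exp (y ^ 2 / 6) * (1 + y ^ 2 / 3)) with (exp (y ^ 2 / 6 + ln (1 + y ^ 2 / 3)))
    by (rewrite exp_plus, exp_ln; nra).
  apply (le_exp_of_derive cosh sinh (fun t => t ^ 2 / 6 + ln (1 + t ^ 2 / 3))
           (fun t => t / 3 + 2 * t / (3 + t ^ 2))); auto.
  - intros t _; apply is_derive_cosh.
  - intros t _. auto_derive; [nra|]. field. nra.
  - intros t Ht. generalize (pade_sinh_le_cosh t ltac:(lra)) (cosh_pos t); intros.
    apply (Rmult_le_reg_l (3 * (3 + t ^ 2))); [nra|].
    replace (3 * (3 + t ^ 2) * ((t / 3 + 2 * t / (3 + t ^ 2)) * cosh t))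
      with (t * (9 + t ^ 2) * cosh t) by (field; nra).
    lra.
  - rewrite cosh_0. replace (0 ^ 2 / 6 + ln (1 + 0 ^ 2 / 3)) with 0
      by (replace (1 + 0 ^ 2 / 3) with 1 by field; rewrite ln_1; field).
    rewrite exp_0; lra.
Qed.

Lemma incr_bounded_below_cvg_m_infty (f : R -> R) (m : R) :
  (forall a b, a <= b -> f a <= f b) -> (forall y, m <= f y) ->
  exists l, filterlim f (Rbar_locally m_infty) (locally l).
Proof.
  intros Hincr Hm.
  destruct (completeness (fun z => exists t, z = - f t)) as [M [HMub HMlub]].
  - exists (- m). intros z [t ->]. generalize (Hm t); lra.
  - exists (- f 0), 0. reflexivity.
  - exists (- M). apply filterlim_locally. intros eps.
    destruct (classic (exists t, M - eps < - f t)) as [[t0 Ht0]|Hn].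
    + exists t0. intros t Ht. change (Rabs (f t - - M) < eps).
      assert (- f t <= M) by (apply HMub; exists t; reflexivity).
      generalize (Hincr t t0 (Rlt_le _ _ Ht)) (cond_pos eps); intros.
      apply Rabs_def1; lra.
    + exfalso. assert (M <= M - eps).
      { apply HMlub. intros z [t ->]. apply Rnot_lt_le. intro; apply Hn; exists t; auto. }
      generalize (cond_pos eps); lra.
Qed.

Lemma sqrt_2PI_pos : 0 < sqrt (2 * PI).
Proof. apply sqrt_lt_R0. generalize PI_RGT_0; lra. Qed.

Lemma phi_pos (y : R) : 0 < phi y.
Proof. apply Rdiv_lt_0_compat; [apply exp_pos | apply sqrt_2PI_pos]. Qed.

Lemma is_derive_phi (y : R) : is_derive phi y (- y * phi y).
Proof.
  generalize sqrt_2PI_pos; intro. unfold phi. auto_derive; [lra|]. simpl; unfold Rdiv; field; lra.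
Qed.

Lemma phi_continuous (y : R) : continuous phi y.
Proof. apply (@ex_derive_continuous R_AbsRing R_NormedModule); eexists; apply is_derive_phi. Qed.

Lemma phi_shift (x s : R) : phi (x + s) = phi x * exp (- s ^ 2 / 2) * exp (- (x * s)).
Proof.
  generalize sqrt_2PI_pos; intro. unfold phi.
  rewrite Rmult_assoc, <- exp_plus.
  replace (- (x + s) ^ 2 / 2) with (- x ^ 2 / 2 + (- s ^ 2 / 2 + - (x * s))) by field.
  rewrite exp_plus. field; lra.
Qed.

Definition Phi0 (y : R) : R := RInt phi 0 y.

Lemma is_derive_Phi0 (y : R) : is_derive Phi0 y (phi y).
Proof.
  apply (is_derive_RInt phi Phi0 0 y); [|apply phi_continuous].
  apply filter_forall. intros b. apply (RInt_correct phi).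
  apply ex_RInt_continuous. intros; apply phi_continuous.
Qed.

Lemma Phi0_incr (a b : R) : a <= b -> Phi0 a <= Phi0 b.
Proof.
  intros H. apply (le_of_derive_nonneg Phi0 phi a b H (fun t _ => is_derive_Phi0 t)).
  intros; apply Rlt_le, phi_pos.
Qed.

Lemma Phi0_lower_bound (y : R) : - (exp (1 / 2) / sqrt (2 * PI)) <= Phi0 y.
Proof.
  set (c := exp (1 / 2) / sqrt (2 * PI)).
  assert (Hc : 0 < c) by (apply Rdiv_lt_0_compat; [apply exp_pos | apply sqrt_2PI_pos]).
  assert (H0 : Phi0 0 = 0) by (unfold Phi0; rewrite RInt_point; reflexivity).
  destruct (Rle_dec 0 y).
  - generalize (Phi0_incr 0 y r); lra.
  - (* [phi t <= c * exp t], so [Phi0 - c * exp] decreases *)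
    assert (H : c * exp y - Phi0 y <= c * exp 0 - Phi0 0).
    { apply (le_of_derive_nonneg (fun t => c * exp t - Phi0 t) (fun t => c * exp t - phi t));
        [lra| |].
      - intros t _. apply (is_derive_minus (fun t => c * exp t) Phi0); [|apply is_derive_Phi0].
        auto_derive; auto. rewrite Rmult_1_l; reflexivity.
      - intros t _.
        assert (exp (- t ^ 2 / 2) <= exp (1 / 2) * exp t)
          by (rewrite <- exp_plus; apply exp_le_mono; generalize (pow2_ge_0 (t + 1)); nra).
        unfold c, phi, Rdiv.
        replace (exp (1 * / 2) * / sqrt (2 * PI) * exp t - exp (- t ^ 2 * / 2) * / sqrt (2 * PI))
          with ((exp (1 / 2) * exp t - exp (- t ^ 2 / 2)) * / sqrt (2 * PI))
          by (unfold Rdiv; ring).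
        apply Rmult_le_pos; [lra | apply Rlt_le, Rinv_0_lt_compat, sqrt_2PI_pos]. }
    rewrite exp_0 in H. generalize (exp_pos y); nra.
Qed.

Lemma Phi_sub_Phi0 (a b : R) : Phi b - Phi a = Phi0 b - Phi0 a.
Proof.
  destruct (incr_bounded_below_cvg_m_infty Phi0 _ Phi0_incr Phi0_lower_bound) as [l Hl].
  assert (H : forall y, Phi y = Phi0 y - l).
  { intros y. apply is_RInt_gen_unique.
    apply (is_RInt_gen_ext (Derive Phi0)).
    - apply filter_forall. intros _ t _. apply is_derive_unique, is_derive_Phi0.
    - apply (is_RInt_gen_Derive Phi0 l (Phi0 y)); auto.
      + apply filter_forall. intros _ t _. eexists; apply is_derive_Phi0.
      + apply filter_forall. intros _ t _.
        apply (continuous_ext phi); [|apply phi_continuous].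
        intros; symmetry; apply is_derive_unique, is_derive_Phi0.
      + intros P HP. apply locally_singleton in HP. exact HP. }
  rewrite !H. ring.
Qed.

Definition central_mass (x s : R) : R := (Phi0 (x + s) - Phi0 (x - s)) / (2 * phi x).

Definition central_density (x t : R) : R := exp (- t ^ 2 / 2) * cosh (x * t).

Lemma is_derive_central_mass (x s : R) :
  is_derive (central_mass x) s (central_density x s).
Proof.
  assert (Hp : is_derive (fun s => Phi0 (x + s)) s (phi (x + s))).
  { evar (l : R); replace (phi (x + s)) with l; subst l.
    - apply (is_derive_comp Phi0 (fun s => x + s)); [apply is_derive_Phi0|].
      auto_derive; auto.
    - change (1 * phi (x + s) = phi (x + s)); ring. }
  assert (Hm : is_derive (fun s => Phi0 (x - s)) s (- phi (x - s))).
  { evar (l : R); replace (- phi (x - s)) with l; subst l.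
    - apply (is_derive_comp Phi0 (fun s => x - s)); [apply is_derive_Phi0|].
      auto_derive; auto.
    - change (- (1) * phi (x - s) = - phi (x - s)); ring. }
  unfold central_mass.
  apply (is_derive_ext (fun s => / (2 * phi x) * (Phi0 (x + s) - Phi0 (x - s)))).
  { intros t; unfold Rdiv; apply Rmult_comm. }
  evar (l : R); replace (central_density x s) with l; subst l.
  - apply (is_derive_scal (fun s => Phi0 (x + s) - Phi0 (x - s))).
    apply (is_derive_minus (fun s => Phi0 (x + s)) (fun s => Phi0 (x - s))); eauto.
  - unfold central_density, cosh, minus, plus, opp, scal; simpl; unfold mult; simpl.
    replace (x - s) with (x + - s) by ring.
    rewrite !phi_shift. generalize (phi_pos x); intro.
    replace ((- s) ^ 2) with (s ^ 2) by ring. replace (- (x * - s)) with (x * s) by ring.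
    simpl; field; lra.
Qed.

Lemma central_mass_0 (x : R) : central_mass x 0 = 0.
Proof. unfold central_mass, Rdiv. rewrite Rplus_0_r, Rminus_0_r, Rminus_diag; ring. Qed.

Lemma ratio_central_mass (x h : R) : 0 < h -> ratio x h = central_mass x (h / 2) / (h / 2).
Proof.
  intros Hh. unfold ratio, central_mass. rewrite Phi_sub_Phi0.
  generalize (phi_pos x); intro. field; lra.
Qed.

Lemma ratio_opp (x h : R) : h <> 0 -> ratio x (- h) = ratio x h.
Proof.
  intros Hh. unfold ratio. generalize (phi_pos x); intro.
  replace (x + - h / 2) with (x - h / 2) by field.
  replace (x - - h / 2) with (x + h / 2) by field.
  field; lra.
Qed.

Lemma exp_tangent_le (a b : R) : exp b * (1 + (a - b)) <= exp a.
Proof.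
  replace (exp a) with (exp b * exp (a - b)) by (rewrite <- exp_plus; f_equal; ring).
  apply Rmult_le_compat_l; [apply Rlt_le, exp_pos | apply exp_ineq1_le].
Qed.

Lemma exp_tangent_lt (a b : R) : a <> b -> exp b * (1 + (a - b)) < exp a.
Proof.
  intros Hab.
  replace (exp a) with (exp b * exp (a - b)) by (rewrite <- exp_plus; f_equal; ring).
  apply Rmult_lt_compat_l; [apply exp_pos | apply exp_ineq1; lra].
Qed.

Lemma central_density_ge (x t : R) :
  exp ((x ^ 2 - 1) * t ^ 2 / 2 - x ^ 4 * t ^ 4 / 12) <= central_density x t.
Proof.
  unfold central_density.
  replace ((x ^ 2 - 1) * t ^ 2 / 2 - x ^ 4 * t ^ 4 / 12)
    with (- t ^ 2 / 2 + ((x * t) ^ 2 / 2 - (x * t) ^ 4 / 12)) by field.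
  rewrite exp_plus. apply Rmult_le_compat_l; [apply Rlt_le, exp_pos | apply exp_le_cosh].
Qed.

Lemma binomial_nonzero_on_subinterval (a b s : R) : 0 < s -> 0 <= b -> (b = 0 -> a <> 0) ->
  exists c d, 0 < c < d /\ d <= s /\ forall t, c <= t <= d -> a - b * t ^ 2 <> 0.
Proof.
  intros Hs Hb Hab.
  destruct (Req_dec b 0) as [->|Hb0].
  { exists (s / 2), s. split; [lra|split; [lra|]]. intros t _. specialize (Hab eq_refl). lra. }
  destruct (Rle_dec (a - b * (s / 2) ^ 2) 0).
  - exists (3 * s / 4), s. split; [lra|split; [lra|]]. intros t Ht.
    assert (b * (s / 2) ^ 2 < b * t ^ 2)
      by (apply Rmult_lt_compat_l; [lra | simpl; nra]).
    lra.
  - exists (s / 4), (s / 2). split; [lra|split; [lra|]]. intros t Ht.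
    assert (b * t ^ 2 <= b * (s / 2) ^ 2)
      by (apply Rmult_le_compat_l; [lra | apply pow_incr; lra]).
    lra.
Qed.

Lemma central_mass_gt (x s : R) : 0 < s ->
  s * exp ((x ^ 2 - 1) * s ^ 2 / 6 - x ^ 4 * s ^ 4 / 60) < central_mass x s.
Proof.
  intros Hs.
  set (g := fun t => (x ^ 2 - 1) * t ^ 2 / 2 - x ^ 4 * t ^ 4 / 12).
  (* [m t] is the mean of [g] over [0, t], hence [d/dt (t * exp (m t)) = exp m * (1 + g - m)] *)
  set (m := fun t => (x ^ 2 - 1) * t ^ 2 / 6 - x ^ 4 * t ^ 4 / 60).
  set (dL := fun t => exp (m t) * (1 + (g t - m t))).
  assert (Hgm : forall t, g t - m t = t ^ 2 * ((x ^ 2 - 1) / 3 - x ^ 4 / 15 * t ^ 2))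
    by (intros t; unfold g, m; field).
  destruct (binomial_nonzero_on_subinterval ((x ^ 2 - 1) / 3) (x ^ 4 / 15) s Hs)
    as [c [d [Hcd [Hds Hnz]]]].
  { generalize (pow2_ge_0 (x ^ 2)); simpl; lra. }
  { intros H4 H1. destruct (Req_dec x 0) as [->|Hx]; [simpl in H1; lra|].
    apply (pow_nonzero x 4 Hx); lra. }
  assert (H : central_mass x 0 - 0 * exp (m 0) < central_mass x s - s * exp (m s)).
  { apply (lt_of_derive_nonneg (fun t => central_mass x t - t * exp (m t))
             (fun t => central_density x t - dL t) 0 s c d); [lra| | |].
    - intros t _. apply (is_derive_minus (central_mass x)); [apply is_derive_central_mass|].
      unfold dL, m, g. auto_derive; auto. simpl; unfold Rdiv, Rminus; field.
    - intros t _. generalize (exp_tangent_le (g t) (m t)) (central_density_ge x t).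
      unfold dL, g; lra.
    - intros t Ht.
      assert (g t <> m t).
      { intros E. assert (E0 : g t - m t = 0) by lra. rewrite Hgm in E0.
        apply Rmult_integral in E0 as [E0|E0]; [|apply (Hnz t Ht); lra].
        generalize (pow_lt t 2 ltac:(lra)); lra. }
      generalize (exp_tangent_lt (g t) (m t) H) (central_density_ge x t).
      unfold dL, g; lra. }
  rewrite central_mass_0 in H. unfold m in H. lra.
Qed.

Lemma exp_pade_gt (u : R) : 0 < u ->
  1 < exp (u / 3 + u ^ 2 / 90) * (1 - u / 3 + 2 * u ^ 2 / 45).
Proof.
  intros Hu.
  set (f := fun u => exp (u / 3 + u ^ 2 / 90) * (1 - u / 3 + 2 * u ^ 2 / 45)).
  assert (Hf0 : f 0 = 1).
  { unfold f. replace (0 / 3 + 0 ^ 2 / 90) with 0 by field. rewrite exp_0. field. }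
  enough (H : f 0 < f u) by (rewrite Hf0 in H; exact H).
  apply (lt_of_derive_nonneg f
           (fun z => exp (z / 3 + z ^ 2 / 90) * (z ^ 2 / 135 + 2 * z ^ 3 / 2025))
           0 u (u / 2) u); [lra| | |].
  - intros z _. unfold f. auto_derive; auto. simpl; unfold Rdiv, Rminus; field.
  - intros z Hz. apply Rmult_le_pos; [apply Rlt_le, exp_pos | simpl; nra].
  - intros z Hz. apply Rmult_lt_0_compat; [apply exp_pos | simpl; nra].
Qed.

Lemma exp_pade_ge (u : R) : 0 <= u ->
  1 <= exp (u / 3 + u ^ 2 / 90) * (1 - u / 3 + 2 * u ^ 2 / 45).
Proof.
  intros Hu. destruct (Req_dec u 0) as [->|].
  - replace (0 / 3 + 0 ^ 2 / 90) with 0 by field. rewrite exp_0. right; field.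
  - apply Rlt_le, exp_pade_gt; lra.
Qed.

(* the derivative of [t * exp ((x^2 - 1) t^2 / 6 + t^4 / 90)] *)
Definition upper_density (x t : R) : R :=
  exp ((x ^ 2 - 1) * t ^ 2 / 6 + t ^ 4 / 90) * (1 + (x ^ 2 - 1) * t ^ 2 / 3 + 2 * t ^ 4 / 45).

Lemma upper_density_factor (x t : R) : upper_density x t =
  exp (- t ^ 2 / 2) * exp ((x * t) ^ 2 / 6) *
  (exp (t ^ 2 / 3 + (t ^ 2) ^ 2 / 90) * (1 - t ^ 2 / 3 + 2 * (t ^ 2) ^ 2 / 45)
   + exp (t ^ 2 / 3 + (t ^ 2) ^ 2 / 90) * ((x * t) ^ 2 / 3)).
Proof.
  unfold upper_density. rewrite <- exp_plus, <- Rmult_plus_distr_l, <- Rmult_assoc, <- exp_plus.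
  replace (- t ^ 2 / 2 + (x * t) ^ 2 / 6 + (t ^ 2 / 3 + (t ^ 2) ^ 2 / 90))
    with ((x ^ 2 - 1) * t ^ 2 / 6 + t ^ 4 / 90) by field.
  f_equal; field.
Qed.

Lemma central_density_le_upper (x t : R) : 0 <= t ->
  central_density x t <= upper_density x t /\
  (0 < t -> central_density x t < upper_density x t).
Proof.
  intros Ht.
  assert (Hc : central_density x t <=
               exp (- t ^ 2 / 2) * exp ((x * t) ^ 2 / 6) * (1 + (x * t) ^ 2 / 3)).
  { unfold central_density. rewrite Rmult_assoc.
    apply Rmult_le_compat_l; [apply Rlt_le, exp_pos | apply cosh_le_exp]. }
  assert (Hw : 1 <= exp (t ^ 2 / 3 + (t ^ 2) ^ 2 / 90))
    by (rewrite <- exp_0; apply exp_le_mono; generalize (pow2_ge_0 t) (pow2_ge_0 (t ^ 2)); lra).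
  assert (HY : 0 <= (x * t) ^ 2 / 3) by (generalize (pow2_ge_0 (x * t)); lra).
  assert (Hp : 0 < exp (- t ^ 2 / 2) * exp ((x * t) ^ 2 / 6))
    by (apply Rmult_lt_0_compat; apply exp_pos).
  rewrite upper_density_factor.
  split.
  - eapply Rle_trans; [exact Hc|]. apply Rmult_le_compat_l; [lra|].
    generalize (exp_pade_ge (t ^ 2) ltac:(apply pow2_ge_0)); nra.
  - intros Ht'. eapply Rle_lt_trans; [exact Hc|]. apply Rmult_lt_compat_l; [lra|].
    generalize (exp_pade_gt (t ^ 2) ltac:(apply pow_lt; lra)); nra.
Qed.

Lemma central_mass_lt (x s : R) : 0 < s ->
  central_mass x s < s * exp ((x ^ 2 - 1) * s ^ 2 / 6 + s ^ 4 / 90).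
Proof.
  intros Hs.
  set (E := fun t => (x ^ 2 - 1) * t ^ 2 / 6 + t ^ 4 / 90).
  assert (H : 0 * exp (E 0) - central_mass x 0 < s * exp (E s) - central_mass x s).
  { apply (lt_of_derive_nonneg (fun t => t * exp (E t) - central_mass x t)
             (fun t => upper_density x t - central_density x t) 0 s (s / 2) s); [lra| | |].
    - intros t _. apply (is_derive_minus _ (central_mass x)); [|apply is_derive_central_mass].
      unfold upper_density, E. auto_derive; auto. simpl; unfold Rdiv, Rminus; field.
    - intros t Ht. destruct (central_density_le_upper x t ltac:(lra)); lra.
    - intros t Ht. destruct (central_density_le_upper x t ltac:(lra)) as [_ H].
      specialize (H ltac:(lra)); lra. }
  rewrite central_mass_0 in H. unfold E in H. lra.
Qed.

Lemma ratio_bounds_pos (x h : R) : 0 < h ->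
  exp ((x ^ 2 - 1) * h ^ 2 / 24 - x ^ 4 * h ^ 4 / 960) < ratio x h /\
  ratio x h < exp ((x ^ 2 - 1) * h ^ 2 / 24 + h ^ 4 / 1440).
Proof.
  intros Hh. rewrite ratio_central_mass by auto.
  assert (Hl := central_mass_gt x (h / 2) ltac:(lra)).
  assert (Hu := central_mass_lt x (h / 2) ltac:(lra)).
  replace ((x ^ 2 - 1) * (h / 2) ^ 2 / 6 - x ^ 4 * (h / 2) ^ 4 / 60)
    with ((x ^ 2 - 1) * h ^ 2 / 24 - x ^ 4 * h ^ 4 / 960) in Hl by field.
  replace ((x ^ 2 - 1) * (h / 2) ^ 2 / 6 + (h / 2) ^ 4 / 90)
    with ((x ^ 2 - 1) * h ^ 2 / 24 + h ^ 4 / 1440) in Hu by field.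
  split; [apply Rlt_div_r | apply Rlt_div_l]; lra.
Qed.

Lemma ratio_bounds (x h : R) : h <> 0 ->
  exp ((x ^ 2 - 1) * h ^ 2 / 24 - x ^ 4 * h ^ 4 / 960) < ratio x h /\
  ratio x h < exp ((x ^ 2 - 1) * h ^ 2 / 24 + h ^ 4 / 1440).
Proof.
  intros Hh. destruct (Rlt_dec 0 h); [apply ratio_bounds_pos; auto|].
  rewrite <- ratio_opp by auto.
  replace (h ^ 2) with ((- h) ^ 2) by field. replace (h ^ 4) with ((- h) ^ 4) by field.
  apply ratio_bounds_pos; lra.
Qed.

Fixpoint exp_taylor (n : nat) (y : R) : R :=
  match n with O => 0 | S m => exp_taylor m y + y ^ m / INR (fact m) end.

Lemma is_derive_exp_taylor (n : nat) (y : R) : is_derive (exp_taylor (S n)) y (exp_taylor n y).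
Proof.
  induction n as [|n IHn].
  - simpl. auto_derive; auto.
  - change (exp_taylor (S (S n))) with (fun y => exp_taylor (S n) y + y ^ S n / INR (fact (S n))).
    apply (is_derive_plus (exp_taylor (S n)) (fun y => y ^ S n / INR (fact (S n))) y _
             (y ^ n / INR (fact n)) IHn).
    auto_derive; [trivial|].
    change (1 * (INR (S n) * y ^ n) * / INR (fact (S n)) = y ^ n / INR (fact n)).
    rewrite fact_simpl, mult_INR. field.
    split; [apply INR_fact_neq_0 | rewrite S_INR; generalize (pos_INR n); lra].
Qed.

Lemma exp_taylor_S_0 (n : nat) : exp_taylor (S n) 0 = 1.
Proof.
  induction n as [|n IHn]; [simpl; field|].
  change (exp_taylor (S n) 0 + 0 ^ S n / INR (fact (S n)) = 1).
  rewrite IHn, pow_i by lia. unfold Rdiv. rewrite Rmult_0_l. ring.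
Qed.

Lemma exp_taylor_remainder (n : nat) (y : R) :
  Rabs (exp y - exp_taylor n y) <= Rabs y ^ n * exp (Rabs y).
Proof.
  revert y. induction n as [|n IHn]; intros y.
  - simpl. rewrite Rminus_0_r, Rmult_1_l, Rabs_pos_eq by (apply Rlt_le, exp_pos).
    apply exp_le_mono, Rle_abs.
  - destruct (MVT_abs (fun t => exp t - exp_taylor (S n) t) (fun t => exp t - exp_taylor n t) y 0)
      as [c [E Hc]].
    { intros t _. apply is_derive_Reals, (is_derive_minus exp (exp_taylor (S n))).
      - apply is_derive_Reals, derivable_pt_lim_exp.
      - apply is_derive_exp_taylor. }
    assert (Hcy : Rabs c <= Rabs y)
      by (generalize (Rabs_le_between_min_max y 0 c Hc); rewrite !Rminus_0_r; auto).
    rewrite exp_0, exp_taylor_S_0, Rminus_diag, !Rminus_0_l, !Rabs_Ropp in E.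
    rewrite E. simpl (Rabs y ^ S n).
    replace (Rabs y * Rabs y ^ n * exp (Rabs y)) with (Rabs y ^ n * exp (Rabs y) * Rabs y) by ring.
    apply Rmult_le_compat_r; [apply Rabs_pos|].
    eapply Rle_trans; [apply IHn|]. apply Rmult_le_compat.
    + apply pow_le, Rabs_pos.
    + apply Rlt_le, exp_pos.
    + apply pow_incr; split; [apply Rabs_pos | auto].
    + apply exp_le_mono; auto.
Qed.

Lemma sq_le_of_Rabs_le (x B : R) : Rabs x <= B -> x ^ 2 <= B ^ 2.
Proof. intros H. rewrite <- (pow2_abs x). apply pow_incr; split; [apply Rabs_pos | auto]. Qed.

Lemma exp_opp_half_sq_taylor (B t : R) : 0 <= t <= B ->
  Rabs (exp (- t ^ 2 / 2) - (1 - t ^ 2 / 2 + (t ^ 2 / 2) ^ 2 / 2)) <= exp (B ^ 2) / 8 * t ^ 6.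
Proof.
  intros Ht. set (v := t ^ 2 / 2).
  assert (Hv : 0 <= v <= B ^ 2) by (generalize (pow2_ge_0 t) (sq_le_of_Rabs_le t B); unfold v;
    rewrite Rabs_pos_eq by lra; intros; split; lra).
  replace (- t ^ 2 / 2) with (- v) by (unfold v; field).
  replace (1 - v + v ^ 2 / 2) with (exp_taylor 3 (- v)) by (simpl; field).
  eapply Rle_trans; [apply exp_taylor_remainder|]. rewrite Rabs_Ropp, Rabs_pos_eq by lra.
  replace (exp (B ^ 2) / 8 * t ^ 6) with (v ^ 3 * exp (B ^ 2)) by (unfold v; field).
  apply Rmult_le_compat_l; [apply pow_le; lra | apply exp_le_mono; lra].
Qed.

Lemma cosh_taylor4 (p : R) :
  Rabs (cosh p - (1 + p ^ 2 / 2 + p ^ 4 / 24)) <= Rabs p ^ 6 * exp (Rabs p).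
Proof.
  replace (cosh p - (1 + p ^ 2 / 2 + p ^ 4 / 24))
    with ((exp p - exp_taylor 6 p) / 2 + (exp (- p) - exp_taylor 6 (- p)) / 2)
    by (unfold cosh; simpl; field).
  eapply Rle_trans; [apply Rabs_triang|].
  unfold Rdiv. rewrite !Rabs_mult, Rabs_inv, (Rabs_pos_eq 2) by lra.
  generalize (exp_taylor_remainder 6 p) (exp_taylor_remainder 6 (- p)).
  rewrite Rabs_Ropp. lra.
Qed.

Lemma cosh_mul_taylor (B x t : R) : Rabs x <= B -> 0 <= t <= B ->
  Rabs (cosh (x * t) - (1 + (x * t) ^ 2 / 2 + (x * t) ^ 4 / 24)) <= B ^ 6 * exp (B ^ 2) * t ^ 6.
Proof.
  intros Hx Ht.
  assert (Hxt : Rabs (x * t) = Rabs x * t) by (rewrite Rabs_mult, (Rabs_pos_eq t); lra).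
  eapply Rle_trans; [apply cosh_taylor4|].
  replace (B ^ 6 * exp (B ^ 2) * t ^ 6) with ((B ^ 6 * t ^ 6) * exp (B ^ 2)) by ring.
  rewrite Hxt. generalize (Rabs_pos x); intro.
  apply Rmult_le_compat; [apply pow_le; nra | apply Rlt_le, exp_pos | |].
  - rewrite Rpow_mult_distr. apply Rmult_le_compat_r; [apply pow_le; lra | apply pow_incr; lra].
  - apply exp_le_mono. simpl. apply Rmult_le_compat; lra.
Qed.

Lemma Rabs_mul_sub_le (a b p q ea eb : R) : Rabs (a - p) <= ea -> Rabs (b - q) <= eb ->
  Rabs (a * b - p * q) <= Rabs p * eb + Rabs q * ea + ea * eb.
Proof.
  intros Ha Hb.
  replace (a * b - p * q) with (p * (b - q) + q * (a - p) + (a - p) * (b - q)) by ring.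
  eapply Rle_trans; [apply Rabs_triang|].
  eapply Rle_trans; [apply Rplus_le_compat_r, Rabs_triang|]. rewrite !Rabs_mult.
  generalize (Rabs_pos p) (Rabs_pos q) (Rabs_pos (a - p)) (Rabs_pos (b - q)); intros.
  apply Rplus_le_compat; [apply Rplus_le_compat|];
    apply Rmult_le_compat; auto; lra.
Qed.

Definition density_taylor4 (x t : R) : R :=
  1 + (x ^ 2 - 1) / 2 * t ^ 2 + (x ^ 4 / 24 - x ^ 2 / 4 + 1 / 8) * t ^ 4.

Lemma taylor_product_sub_le (B x t : R) : Rabs x <= B -> 0 <= t <= B ->
  Rabs ((1 - t ^ 2 / 2 + (t ^ 2 / 2) ^ 2 / 2) * (1 + (x * t) ^ 2 / 2 + (x * t) ^ 4 / 24)
        - density_taylor4 x t)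
  <= (B ^ 2 / 16 + B ^ 4 / 48 + B ^ 6 / 192) * t ^ 6.
Proof.
  intros Hx Ht.
  assert (HX : 0 <= x ^ 2 <= B ^ 2) by (split; [apply pow2_ge_0 | apply sq_le_of_Rabs_le; auto]).
  assert (HT : 0 <= t ^ 2 <= B ^ 2)
    by (split; [apply pow2_ge_0 | apply sq_le_of_Rabs_le; rewrite Rabs_pos_eq; lra]).
  assert (HX4 : 0 <= (x ^ 2) ^ 2 <= (B ^ 2) ^ 2)
    by (split; [apply pow2_ge_0 | apply pow_incr; lra]).
  assert (0 <= (x ^ 2) ^ 2 * t ^ 2 <= (B ^ 2) ^ 2 * B ^ 2)
    by (split; [apply Rmult_le_pos | apply Rmult_le_compat]; lra).
  unfold density_taylor4.
  replace (_ - _) with (t ^ 6 * (x ^ 2 / 16 - (x ^ 2) ^ 2 / 48 + (x ^ 2) ^ 2 * t ^ 2 / 192))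
    by field.
  rewrite Rabs_mult, Rabs_pos_eq, Rmult_comm by (apply pow_le; lra).
  apply Rmult_le_compat_r; [apply pow_le; lra|]. apply Rabs_le.
  replace (B ^ 4) with ((B ^ 2) ^ 2) by ring. replace (B ^ 6) with ((B ^ 2) ^ 2 * B ^ 2) by ring.
  split; lra.
Qed.

Lemma taylor_factors_bounded (B x t : R) : Rabs x <= B -> 0 <= t <= B ->
  Rabs (1 - t ^ 2 / 2 + (t ^ 2 / 2) ^ 2 / 2) <= 1 + B ^ 2 + B ^ 4 /\
  Rabs (1 + (x * t) ^ 2 / 2 + (x * t) ^ 4 / 24) <= 1 + B ^ 4 + B ^ 8.
Proof.
  intros Hx Ht. split.
  - assert (HT : 0 <= t ^ 2 <= B ^ 2)
      by (split; [apply pow2_ge_0 | apply sq_le_of_Rabs_le; rewrite Rabs_pos_eq; lra]).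
    apply Rabs_le. split; simpl in *; nra.
  - assert (0 <= (x * t) ^ 2 <= (B ^ 2) ^ 2).
    { split; [apply pow2_ge_0 | apply sq_le_of_Rabs_le].
      rewrite Rabs_mult, (Rabs_pos_eq t) by lra. simpl. rewrite Rmult_1_r.
      apply Rmult_le_compat; try lra; apply Rabs_pos. }
    apply Rabs_le.
    replace ((x * t) ^ 4) with (((x * t) ^ 2) ^ 2) by ring.
    replace (B ^ 4) with ((B ^ 2) ^ 2) by ring. replace (B ^ 8) with (((B ^ 2) ^ 2) ^ 2) by ring.
    split; nra.
Qed.

Lemma central_density_taylor (B : R) : 0 < B -> exists M, forall x t,
  Rabs x <= B -> 0 <= t <= B ->
  Rabs (central_density x t - density_taylor4 x t) <= M * t ^ 6.
Proof.
  intros HB. set (E := exp (B ^ 2)).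
  set (MA := 1 + B ^ 2 + B ^ 4). set (MC := 1 + B ^ 4 + B ^ 8).
  set (ea := E / 8). set (eb := B ^ 6 * E).
  exists (MA * eb + MC * ea + ea * eb * B ^ 6 + (B ^ 2 / 16 + B ^ 4 / 48 + B ^ 6 / 192)).
  intros x t Hx Ht.
  set (A := 1 - t ^ 2 / 2 + (t ^ 2 / 2) ^ 2 / 2).
  set (C := 1 + (x * t) ^ 2 / 2 + (x * t) ^ 4 / 24).
  assert (HE : 0 < E) by apply exp_pos.
  assert (HB6 : 0 <= B ^ 6) by (apply pow_le; lra).
  assert (HT6 : 0 <= t ^ 6 <= B ^ 6) by (split; [apply pow_le | apply pow_incr]; lra).
  destruct (taylor_factors_bounded B x t Hx Ht) as [HA HC]. fold A C MA MC in HA, HC.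
  assert (Hprod := Rabs_mul_sub_le _ _ _ _ _ _
                     (exp_opp_half_sq_taylor B t Ht) (cosh_mul_taylor B x t Hx Ht)).
  fold A C E ea eb in Hprod.
  assert (Hea : 0 <= ea) by (unfold ea; lra).
  assert (Heb : 0 <= eb) by (unfold eb; apply Rmult_le_pos; lra).
  assert (Hea_eb : ea * t ^ 6 * (eb * t ^ 6) <= ea * eb * B ^ 6 * t ^ 6).
  { replace (ea * t ^ 6 * (eb * t ^ 6)) with (ea * eb * t ^ 6 * t ^ 6) by ring.
    apply Rmult_le_compat_r; [lra|]. apply Rmult_le_compat_l; [apply Rmult_le_pos|]; lra. }
  assert (HA' : Rabs A * (eb * t ^ 6) <= MA * eb * t ^ 6).
  { rewrite Rmult_assoc. apply Rmult_le_compat_r; [apply Rmult_le_pos; lra | auto]. }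
  assert (HC' : Rabs C * (ea * t ^ 6) <= MC * ea * t ^ 6).
  { rewrite Rmult_assoc. apply Rmult_le_compat_r; [apply Rmult_le_pos; lra | auto]. }
  assert (Hpoly := taylor_product_sub_le B x t Hx Ht). fold A C in Hpoly.
  unfold central_density.
  replace (exp (- t ^ 2 / 2) * cosh (x * t) - density_taylor4 x t)
    with ((exp (- t ^ 2 / 2) * cosh (x * t) - A * C) + (A * C - density_taylor4 x t)) by ring.
  eapply Rle_trans; [apply Rabs_triang|]. lra.
Qed.

Lemma Rabs_sub_le_of_derive (F f G g : R -> R) (M : R) (n : nat) (s : R) : 0 <= s ->
  (forall t, 0 <= t <= s -> is_derive F t (f t)) ->
  (forall t, 0 <= t <= s -> is_derive G t (g t)) ->
  (forall t, 0 <= t <= s -> Rabs (f t - g t) <= M * t ^ n) ->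
  Rabs ((F s - G s) - (F 0 - G 0)) <= M / INR (S n) * s ^ S n.
Proof.
  intros Hs HF HG Hfg.
  assert (Hp : forall t, is_derive (fun t => M / INR (S n) * t ^ S n) t (M * t ^ n)).
  { intros t. evar (l : R); replace (M * t ^ n) with l; subst l.
    - apply (is_derive_scal (fun t => t ^ S n)), (is_derive_pow (fun t => t)), is_derive_id.
    - change (M / INR (S n) * (INR (S n) * 1 * t ^ n) = M * t ^ n).
      field. apply not_0_INR; lia. }
  assert (Hup : F s - G s - M / INR (S n) * s ^ S n <= F 0 - G 0 - M / INR (S n) * 0 ^ S n).
  { enough (- (F 0 - G 0 - M / INR (S n) * 0 ^ S n) <= - (F s - G s - M / INR (S n) * s ^ S n))
      by lra.
    apply (le_of_derive_nonneg (fun t => - (F t - G t - M / INR (S n) * t ^ S n))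
             (fun t => - (f t - g t - M * t ^ n))); auto.
    - intros t Ht. apply (is_derive_opp (fun t => F t - G t - M / INR (S n) * t ^ S n)).
      apply (is_derive_minus (fun t => F t - G t)); [apply (is_derive_minus F G)|]; auto.
    - intros t Ht. generalize (Hfg t Ht); intros H%Rabs_le_between; lra. }
  assert (Hlo : F 0 - G 0 + M / INR (S n) * 0 ^ S n <= F s - G s + M / INR (S n) * s ^ S n).
  { apply (le_of_derive_nonneg (fun t => F t - G t + M / INR (S n) * t ^ S n)
             (fun t => f t - g t + M * t ^ n)); auto.
    - intros t Ht.
      apply (is_derive_plus (fun t => F t - G t)); [apply (is_derive_minus F G)|]; auto.
    - intros t Ht. generalize (Hfg t Ht); intros H%Rabs_le_between; lra. }
  rewrite pow_i in Hup, Hlo by lia. apply Rabs_le. lra.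
Qed.

Lemma ratio_taylor (B : R) : 0 < B -> exists K, 0 <= K /\ forall x h,
  Rabs x <= B -> 0 < h <= B ->
  Rabs (ratio x h - (1 + (x ^ 2 - 1) / 6 * (h / 2) ^ 2
                     + (x ^ 4 / 24 - x ^ 2 / 4 + 1 / 8) / 5 * (h / 2) ^ 4))
  <= K * (h / 2) ^ 6.
Proof.
  intros HB. destruct (central_density_taylor B HB) as [M HM].
  exists (Rabs M / 7). split; [generalize (Rabs_pos M); lra|].
  intros x h Hx Hh. set (s := h / 2). assert (Hs : 0 < s <= B) by (unfold s; lra).
  set (a := (x ^ 2 - 1) / 6). set (b := (x ^ 4 / 24 - x ^ 2 / 4 + 1 / 8) / 5).
  set (P := fun t => t + a * t ^ 3 + b * t ^ 5).
  assert (H : Rabs ((central_mass x s - P s) - (central_mass x 0 - P 0)) <= M / INR 7 * s ^ 7).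
  { apply (Rabs_sub_le_of_derive _ (central_density x) _ (density_taylor4 x));
      [lra | intros; apply is_derive_central_mass | | intros t Ht; apply HM; lra].
    intros t _. unfold P, a, b, density_taylor4.
    auto_derive; auto. simpl; unfold Rdiv, Rminus; field. }
  replace (central_mass x 0 - P 0) with 0 in H
    by (rewrite central_mass_0; unfold P; simpl; field).
  rewrite Rminus_0_r in H.
  rewrite ratio_central_mass by lra. fold s.
  replace (central_mass x s / s - (1 + a * s ^ 2 + b * s ^ 4)) with ((central_mass x s - P s) / s)
    by (unfold P; field; lra).
  unfold Rdiv. rewrite Rabs_mult, (Rabs_pos_eq (/ s)) by (apply Rlt_le, Rinv_0_lt_compat; lra).
  apply (Rmult_le_reg_r s); [lra|].
  rewrite Rmult_assoc, Rinv_l, Rmult_1_r by lra.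
  eapply Rle_trans; [exact H|].
  replace (INR 7) with 7 by (simpl; ring).
  replace (Rabs M * / 7 * s ^ 6 * s) with (Rabs M / 7 * s ^ 7) by (simpl; field).
  apply Rmult_le_compat_r; [apply pow_le; lra|].
  unfold Rdiv; apply Rmult_le_compat_r; [lra | apply Rle_abs].
Qed.

Lemma ln_taylor2 (m z : R) : 0 < m <= 1 -> m <= z ->
  Rabs (ln z - (z - 1) + (z - 1) ^ 2 / 2) <= Rabs (z - 1) ^ 3 / m.
Proof.
  intros Hm Hz.
  destruct (MVT_abs (fun t => ln t - (t - 1) + (t - 1) ^ 2 / 2) (fun t => (t - 1) ^ 2 / t) z 1)
    as [c [E Hc]].
  { intros t Ht. apply is_derive_Reals.
    assert (0 < t) by (unfold Rmin in Ht; destruct Rle_dec; lra).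
    auto_derive; [lra|]. simpl; unfold Rdiv, Rminus; field; lra. }
  assert (Hcm : m <= c) by (unfold Rmin in Hc; destruct Rle_dec; lra).
  assert (Hcz : Rabs (c - 1) <= Rabs (z - 1)) by (apply Rabs_le_between_min_max; auto).
  rewrite ln_1, Rminus_diag in E.
  replace (0 - 0 + 0 ^ 2 / 2) with 0 in E by (simpl; field).
  rewrite Rminus_0_l, Rabs_Ropp in E. rewrite E, (Rabs_minus_sym 1 z).
  replace (Rabs (z - 1) ^ 3 / m) with (Rabs (z - 1) ^ 2 / m * Rabs (z - 1)) by (simpl; field; lra).
  apply Rmult_le_compat_r; [apply Rabs_pos|].
  rewrite Rabs_pos_eq
    by (apply Rmult_le_pos; [apply pow2_ge_0 | apply Rlt_le, Rinv_0_lt_compat; lra]).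
  rewrite <- (pow2_abs (c - 1)). unfold Rdiv.
  apply Rmult_le_compat; [apply pow2_ge_0 | apply Rlt_le, Rinv_0_lt_compat; lra | |].
  - apply pow_incr; split; [apply Rabs_pos | auto].
  - apply Rinv_le_contravar; lra.
Qed.

Lemma pow_le_pow_mul (s B : R) (m n : nat) : 0 <= s <= B -> (m <= n)%nat ->
  s ^ n <= B ^ (n - m) * s ^ m.
Proof.
  intros Hs Hmn. replace n with (n - m + m)%nat at 1 by lia. rewrite pow_add.
  apply Rmult_le_compat_r; [apply pow_le; lra | apply pow_incr; lra].
Qed.

Lemma expansion_remainders (K Aa Ab B a b s r : R) :
  0 <= K -> Rabs a <= Aa -> Rabs b <= Ab -> 0 <= s <= B ->
  Rabs (r - (1 + a * s ^ 2 + b * s ^ 4)) <= K * s ^ 6 ->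
  Rabs (r - 1 - a * s ^ 2) <= (Ab + K * B ^ 2) * s ^ 4 /\
  Rabs (r - 1) <= (Aa + (Ab + K * B ^ 2) * B ^ 2) * s ^ 2.
Proof.
  intros HK Ha Hb Hs He.
  assert (H64 := pow_le_pow_mul s B 4 6 Hs ltac:(lia)).
  assert (H42 := pow_le_pow_mul s B 2 4 Hs ltac:(lia)). simpl Nat.sub in H64, H42.
  assert (Hs2 : 0 <= s ^ 2) by apply pow2_ge_0.
  assert (Hs4 : 0 <= s ^ 4) by (apply pow_le; lra).
  assert (H4 : Rabs (r - 1 - a * s ^ 2) <= (Ab + K * B ^ 2) * s ^ 4).
  { replace (r - 1 - a * s ^ 2) with (b * s ^ 4 + (r - (1 + a * s ^ 2 + b * s ^ 4))) by ring.
    eapply Rle_trans; [apply Rabs_triang|]. rewrite Rabs_mult, (Rabs_pos_eq (s ^ 4)) by lra.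
    assert (Rabs b * s ^ 4 <= Ab * s ^ 4) by (apply Rmult_le_compat_r; lra).
    assert (K * s ^ 6 <= K * (B ^ 2 * s ^ 4)) by (apply Rmult_le_compat_l; lra).
    lra. }
  split; [exact H4|].
  replace (r - 1) with (a * s ^ 2 + (r - 1 - a * s ^ 2)) by ring.
  eapply Rle_trans; [apply Rabs_triang|]. rewrite Rabs_mult, (Rabs_pos_eq (s ^ 2)) by lra.
  assert (Rabs a * s ^ 2 <= Aa * s ^ 2) by (apply Rmult_le_compat_r; lra).
  assert (0 <= Ab + K * B ^ 2) by (generalize (Rabs_pos b) (pow2_ge_0 B); nra).
  assert ((Ab + K * B ^ 2) * s ^ 4 <= (Ab + K * B ^ 2) * (B ^ 2 * s ^ 2))
    by (apply Rmult_le_compat_l; lra).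
  lra.
Qed.

Lemma ln_expansion (m K Aa Ab B : R) : 0 < m <= 1 -> 0 <= K -> exists C, forall a b s r,
  Rabs a <= Aa -> Rabs b <= Ab -> 0 <= s <= B -> m <= r ->
  Rabs (r - (1 + a * s ^ 2 + b * s ^ 4)) <= K * s ^ 6 ->
  Rabs (ln r - (a * s ^ 2 + (b - a ^ 2 / 2) * s ^ 4)) <= C * s ^ 6.
Proof.
  intros Hm HK.
  set (c4 := Ab + K * B ^ 2). set (c2 := Aa + c4 * B ^ 2).
  exists (c2 ^ 3 / m + K + c4 * (c2 + Aa) / 2).
  intros a b s r Ha Hb Hs Hr He.
  destruct (expansion_remainders K Aa Ab B a b s r HK Ha Hb Hs He) as [H4 H2].
  fold c4 c2 in H4, H2. set (u := r - 1) in *.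
  assert (Hln : Rabs (ln r - u + u ^ 2 / 2) <= c2 ^ 3 / m * s ^ 6).
  { eapply Rle_trans; [apply (ln_taylor2 m r Hm Hr)|].
    replace (c2 ^ 3 / m * s ^ 6) with ((c2 * s ^ 2) ^ 3 / m) by (field; lra).
    unfold Rdiv. apply Rmult_le_compat_r; [apply Rlt_le, Rinv_0_lt_compat; lra|].
    apply pow_incr. split; [apply Rabs_pos | auto]. }
  assert (Hup : Rabs (u + a * s ^ 2) <= (c2 + Aa) * s ^ 2).
  { eapply Rle_trans; [apply Rabs_triang|]. rewrite Rabs_mult, (Rabs_pos_eq (s ^ 2)).
    - assert (Rabs a * s ^ 2 <= Aa * s ^ 2) by (apply Rmult_le_compat_r; [apply pow2_ge_0 | lra]).
      lra.
    - apply pow2_ge_0. }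
  assert (Hprod : Rabs ((u - a * s ^ 2) * (u + a * s ^ 2) / 2) <= c4 * (c2 + Aa) / 2 * s ^ 6).
  { unfold Rdiv. rewrite !Rabs_mult, (Rabs_pos_eq (/ 2)) by lra.
    replace (c4 * (c2 + Aa) * / 2 * s ^ 6) with (c4 * s ^ 4 * ((c2 + Aa) * s ^ 2) * / 2) by ring.
    apply Rmult_le_compat_r; [lra|].
    apply Rmult_le_compat; auto; apply Rabs_pos. }
  replace (ln r - (a * s ^ 2 + (b - a ^ 2 / 2) * s ^ 4))
    with ((ln r - u + u ^ 2 / 2) + (r - (1 + a * s ^ 2 + b * s ^ 4))
          - (u - a * s ^ 2) * (u + a * s ^ 2) / 2)
    by (unfold u; field).
  unfold Rminus at 1. eapply Rle_trans; [apply Rabs_triang|]. rewrite Rabs_Ropp.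
  eapply Rle_trans; [apply Rplus_le_compat_r, Rabs_triang|]. lra.
Qed.

Lemma ratio_ge (B x h : R) : Rabs x <= B -> Rabs h <= B -> h <> 0 ->
  exp (- (B ^ 2 / 24 + B ^ 8 / 960)) <= ratio x h.
Proof.
  intros Hx Hh Hh0. apply Rlt_le. eapply Rle_lt_trans; [|apply (ratio_bounds x h Hh0)].
  apply exp_le_mono.
  assert (HX := sq_le_of_Rabs_le x B Hx). assert (HH := sq_le_of_Rabs_le h B Hh).
  assert (0 <= x ^ 2) by apply pow2_ge_0. assert (0 <= h ^ 2) by apply pow2_ge_0.
  assert (x ^ 2 * h ^ 2 <= B ^ 2 * B ^ 2) by (apply Rmult_le_compat; lra).
  assert ((x ^ 2 * h ^ 2) ^ 2 <= (B ^ 2 * B ^ 2) ^ 2) by (apply pow_incr; split; [nra | auto]).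
  replace (x ^ 4 * h ^ 4) with ((x ^ 2 * h ^ 2) ^ 2) by ring.
  replace (B ^ 8) with ((B ^ 2 * B ^ 2) ^ 2) by ring.
  nra.
Qed.

Lemma ln_ratio_expansion (B : R) : 0 < B -> exists C, forall x h,
  Rabs x <= B -> Rabs h <= B -> h <> 0 ->
  Rabs (ln (ratio x h) - ((x ^ 2 - 1) * h ^ 2 / 24 + (- x ^ 4 - 4 * x ^ 2 + 2) * h ^ 4 / 2880))
  <= C * h ^ 6.
Proof.
  intros HB. destruct (ratio_taylor B HB) as [K [HK Hratio]].
  set (m := exp (- (B ^ 2 / 24 + B ^ 8 / 960))).
  assert (Hm : 0 < m <= 1).
  { split; [apply exp_pos|]. rewrite <- exp_0. apply exp_le_mono.
    generalize (pow2_ge_0 B) (pow2_ge_0 (B ^ 4)); simpl; lra. }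
  destruct (ln_expansion m K ((B ^ 2 + 1) / 6) ((B ^ 4 / 24 + B ^ 2 / 4 + 1 / 8) / 5) B Hm HK)
    as [C HC].
  assert (Hpos : forall x h, Rabs x <= B -> 0 < h <= B ->
    Rabs (ln (ratio x h) - ((x ^ 2 - 1) * h ^ 2 / 24 + (- x ^ 4 - 4 * x ^ 2 + 2) * h ^ 4 / 2880))
    <= C / 64 * h ^ 6).
  { intros x h Hx Hh.
    assert (HX := sq_le_of_Rabs_le x B Hx). assert (0 <= x ^ 2) by apply pow2_ge_0.
    assert (x ^ 4 <= B ^ 4)
      by (replace (x ^ 4) with ((x ^ 2) ^ 2) by ring; replace (B ^ 4) with ((B ^ 2) ^ 2) by ring;
          apply pow_incr; lra).
    assert (0 <= x ^ 4) by (replace (x ^ 4) with ((x ^ 2) ^ 2) by ring; apply pow2_ge_0).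
    replace ((x ^ 2 - 1) * h ^ 2 / 24 + (- x ^ 4 - 4 * x ^ 2 + 2) * h ^ 4 / 2880)
      with ((x ^ 2 - 1) / 6 * (h / 2) ^ 2
            + ((x ^ 4 / 24 - x ^ 2 / 4 + 1 / 8) / 5 - ((x ^ 2 - 1) / 6) ^ 2 / 2) * (h / 2) ^ 4)
      by field.
    replace (C / 64 * h ^ 6) with (C * (h / 2) ^ 6) by field.
    apply HC; [apply Rabs_le; lra | apply Rabs_le; lra | lra | | apply Hratio; auto].
    apply ratio_ge; [auto | rewrite Rabs_pos_eq; lra | lra]. }
  exists (C / 64). intros x h Hx Hh Hh0.
  destruct (Rlt_dec 0 h); [apply Hpos; auto; split; [lra | generalize (Rle_abs h); lra]|].
  rewrite <- ratio_opp by auto.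
  replace (h ^ 2) with ((- h) ^ 2) by field. replace (h ^ 4) with ((- h) ^ 4) by field.
  replace (h ^ 6) with ((- h) ^ 6) by field.
  apply Hpos; auto. split; [lra | rewrite <- Rabs_Ropp in Hh; generalize (Rle_abs (- h)); lra].
Qed.

Lemma quartic_le_2 (x : R) : - x ^ 4 - 4 * x ^ 2 + 2 <= 2.
Proof.
  generalize (pow2_ge_0 x) (pow2_ge_0 (x ^ 2)). replace (x ^ 4) with ((x ^ 2) ^ 2) by ring. lra.
Qed.

Lemma quartic_div_pow4_ge (x : R) : x <> 0 -> -3 <= (- x ^ 4 - 4 * x ^ 2 + 2) / x ^ 4.
Proof.
  intros Hx.
  assert (H4 : 0 < x ^ 4)
    by (replace (x ^ 4) with ((x ^ 2) ^ 2) by ring; apply pow2_gt_0, pow_nonzero, Hx).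
  apply (Rmult_le_reg_r (x ^ 4)); [auto|].
  replace ((- x ^ 4 - 4 * x ^ 2 + 2) / x ^ 4 * x ^ 4) with (- x ^ 4 - 4 * x ^ 2 + 2)
    by (field; lra).
  replace (x ^ 4) with ((x ^ 2) ^ 2) by ring. generalize (pow2_ge_0 (x ^ 2 - 1)); nra.
Qed.

Theorem lemma3p1 :
  (forall x h : R, h <> 0 ->
     exp ((x ^ 2 - 1) * h ^ 2 / 24 - x ^ 4 * h ^ 4 / 960) < ratio x h /\
     ratio x h < exp ((x ^ 2 - 1) * h ^ 2 / 24 + h ^ 4 / 1440)) /\
  (forall B : R, 0 < B -> exists C : R, forall x h : R,
     Rabs x <= B -> Rabs h <= B -> h <> 0 ->
     Rabs (ln (ratio x h)
           - ((x ^ 2 - 1) * h ^ 2 / 24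
              + (- x ^ 4 - 4 * x ^ 2 + 2) * h ^ 4 / 2880)) <= C * h ^ 6) /\
  ((forall x : R, - x ^ 4 - 4 * x ^ 2 + 2 <= 2) /\
   (exists x : R, - x ^ 4 - 4 * x ^ 2 + 2 = 2)) /\
  ((forall x : R, x <> 0 -> -3 <= (- x ^ 4 - 4 * x ^ 2 + 2) / x ^ 4) /\
   (exists x : R, x <> 0 /\ (- x ^ 4 - 4 * x ^ 2 + 2) / x ^ 4 = -3)).
Proof.
  split; [exact ratio_bounds|].
  split; [exact ln_ratio_expansion|].
  split; split.
  - exact quartic_le_2.
  - exists 0. simpl; ring.
  - exact quartic_div_pow4_ge.
  - exists 1. split; [lra | simpl; field].
Qed.
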